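(* Let $D$ be a strong nonseparable digraph and let $(D_0,D_1,\ldots,D_k)$ be an ear decomposition of $D$. Let $i\in\{1,\ldots,k\}$ and let $P_{i-1}=(x_0,x_1,\ldots,x_{r-1},x_r)$ be the ear of $D_{i-1}$ in $D$ (so $D_i=D_{i-1}\cup P_{i-1}$), with $l(P_{i-1})\geq 2$. If $D_i$ has a kernel $N$ and one of the following holds: (1) $x_0,x_r\in N$; (2) $x_0\in N$ and $x_r\notin N$; (3) $x_0\notin N$, $x_r\in N$ and $l(P_{i-1})$ is even; (4) $x_0,x_r\notin N$ and $l(P_{i-1})$ is odd; then $D_{i-1}$ has a kernel.
   Context: All digraphs are finite, without loops or multiple arcs. Paths and cycles are directed; the length $l(P)$ of a path $P$ is its number of arcs. A digraph is strong if for every ordered pair of vertices $x,y$ there is a directed path from $x$ to $y$; it is nonseparable if its underlying undirected graph is nonseparable (has no cut vertex). For a subdigraph $H$ of $D$, an ear of $H$ in $D$ is a directed path $(x_0,\ldots,x_r)$ in $D$ whose end vertices lie in $H$ and whose internal vertices do not lie in $H$. An ear decomposition of a nonseparable strong digraph $D$ is a sequence $(D_0,\ldots,D_k)$ of nonseparable strong subdigraphs of $D$ such that $D_0$ is a directed cycle, $D_{j+1}=D_j\cup P_j$ with $P_j$ an ear of $D_j$ in $D$ for each $j\in\{0,\ldots,k-1\}$, and $D_k=D$. A kernel of a digraph is a set $N$ of vertices that is independent (no arc between two of its vertices) and absorbent (every vertex not in $N$ has an out-neighbour in $N$). *)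

From mathcomp Require Import all_boot.
Set Implicit Arguments. Unset Strict Implicit. Unset Printing Implicit Defensive.

(* A digraph D is given by a finite vertex type T (all of T is the vertex set)
   and an irreflexive arc relation E (no loops, no multiple arcs). *)
Definition subdigraph (T : finType) := ({set T} * {set T * T})%type.

Section Digraphs.
Variable T : finType.
Implicit Types (E : rel T) (H : subdigraph T).

Definition whole_digraph E : subdigraph T := ([set: T], [set a | E a.1 a.2]).

Definition is_subdigraph E H :=
  forall a, a \in H.2 -> [/\ E a.1 a.2, a.1 \in H.1 & a.2 \in H.1].

Definition arcrel H : rel T := fun x y => (x, y) \in H.2.

Definition strong H :=
  forall x y, x \in H.1 -> y \in H.1 -> connect (arcrel H) x y.

Definition und_avoid H (X : {set T}) : rel T :=
  fun x y => [&& x \notin X, y \notin X & (arcrel H x y || arcrel H y x)].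

Definition nonseparable H :=
  (forall x y, x \in H.1 -> y \in H.1 -> connect (und_avoid H set0) x y) /\
  (forall v x y, v \in H.1 -> x \in H.1 :\ v -> y \in H.1 :\ v ->
      connect (und_avoid H [set v]) x y).

Definition is_dicycle E H :=
  exists c : seq T, [/\ 1 < size c, uniq c, cycle E c,
     H.1 = [set x in c] & H.2 = [set a in zip c (rot 1 c)]].

(* An ear is represented as (x0, mid, xr), the directed path
   x0 :: mid ++ [:: xr]; its length is size mid + 1. *)
Definition ear_seq (P : T * seq T * T) : seq T :=
  P.1.1 :: rcons P.1.2 P.2.
Definition ear_len (P : T * seq T * T) : nat := (size P.1.2).+1.
Definition ear_arcs (P : T * seq T * T) : {set T * T} :=
  [set a in zip (P.1.1 :: P.1.2) (rcons P.1.2 P.2)].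

Definition is_ear E H (P : T * seq T * T) :=
  [/\ path E P.1.1 (rcons P.1.2 P.2), uniq (ear_seq P),
      P.1.1 \in H.1, P.2 \in H.1 & all (fun x => x \notin H.1) P.1.2].

Definition add_ear H (P : T * seq T * T) : subdigraph T :=
  (H.1 :|: [set x in ear_seq P], H.2 :|: ear_arcs P).

Definition ear_decomposition E (k : nat) (Ds : nat -> subdigraph T)
    (Ps : nat -> T * seq T * T) :=
  [/\ is_dicycle E (Ds 0),
      (forall j, j <= k -> [/\ is_subdigraph E (Ds j), nonseparable (Ds j)
                             & strong (Ds j)]),
      (forall j, j < k -> is_ear E (Ds j) (Ps j) /\
                          Ds j.+1 = add_ear (Ds j) (Ps j)) &
      Ds k = whole_digraph E].

Definition is_kernel H (N : {set T}) :=
  [/\ N \subset H.1,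
      (forall x y, x \in N -> y \in N -> (x, y) \notin H.2) &
      (forall v, v \in H.1 :\: N -> exists2 y, y \in N & (v, y) \in H.2)].

Definition has_kernel H := exists N, is_kernel H N.

End Digraphs.

From mathcomp Require Import all_boot.

(* Restricted to D_{i-1}, a kernel N of D_i = D_{i-1} ∪ P stays independent,
   and absorbency can only fail at x0, whose new out-arc goes to x1; so
   N ∩ V(D_{i-1}) is a kernel as soon as x0 ∈ N or x1 ∉ N.  Each internal
   vertex x_j of the ear has x_{j+1} as its only out-neighbour in D_i, which
   forces membership in N to alternate along x1, ..., xr: x1 ∈ N iff
   (xr ∈ N) xor (l(P) is even).  Each of the four cases thus gives x0 ∈ N or
   x1 ∉ N. *)

Set Implicit Arguments.
Unset Strict Implicit.
Unset Printing Implicit Defensive.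

Section ZipPath.
Variables S U : eqType.

Lemma mem_zip_fst (u : seq S) (w : seq U) a b : (a, b) \in zip u w -> a \in u.
Proof.
elim: u w => [|x u IHu] [|y w] //=; rewrite !inE => /orP[/eqP[-> _]|/IHu->].
  by rewrite eqxx.
by rewrite orbT.
Qed.

Lemma zip_uniq_fst (u : seq S) (w : seq U) a b c :
  uniq u -> (a, b) \in zip u w -> (a, c) \in zip u w -> b = c.
Proof.
elim: u w => [|x u IHu] [|y w] //= /andP[xNu uniq_u].
rewrite !inE => /orP[/eqP[ax ->]|ab_in] /orP[/eqP[ax' ->]|ac_in] //.
- by rewrite -ax (mem_zip_fst ac_in) in xNu.
- by rewrite -ax' (mem_zip_fst ab_in) in xNu.
- exact: IHu ab_in ac_in.
Qed.

Lemma path_mem_zip_belast (x : S) (p : seq S) :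
  path (fun a b => (a, b) \in zip (belast x p) p) x p.
Proof.
elim: p x => //= y p IHp x; rewrite inE eqxx /=.
by apply: sub_path (IHp y) => a b /= ab_in; rewrite inE ab_in orbT.
Qed.

Lemma sub_path_belast (P : pred S) (e e' : rel S) x p :
  (forall a b, P a -> e a b -> e' a b) ->
  all P (belast x p) -> path e x p -> path e' x p.
Proof.
move=> ee'; elim: p x => //= y p IHp x /andP[Px Pp] /andP[exy pp].
by rewrite (ee' _ _ Px exy) IHp.
Qed.

Lemma path_alternating_parity (f : S -> bool) x p :
  path [rel a b | f a != f b] x p -> f x = f (last x p) (+) odd (size p).
Proof.
elim: p x => [|y p IHp] x /=; first by rewrite addbF.
case/andP=> fxy /IHp fy; rewrite addbN -fy.
by case: (f x) (f y) fxy => [] [].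
Qed.

End ZipPath.

Section Kernels.
Variable T : finType.
Implicit Types (G : subdigraph T) (N : {set T}).

Definition sole_out_neighbour G : rel T :=
  fun a b => (a \in G.1) && [forall c, ((a, c) \in G.2) == (c == b)].

Lemma kernel_sole_out_neighbour G N a b :
  is_kernel G N -> sole_out_neighbour G a b -> (a \in N) != (b \in N).
Proof.
move=> [_ indN absN] /andP[aG /forallP outa].
have ab_arc : (a, b) \in G.2 by rewrite (eqP (outa b)).
case aN: (a \in N) => /=.
  by apply/negP => bN; move: (indN _ _ aN bN); rewrite ab_arc.
have [|y yN ay_arc] := absN a; first by rewrite inE aN aG.
by move: ay_arc; rewrite (eqP (outa y)) => /eqP <-; rewrite yN.
Qed.

Lemma kernel_parity_along G N x p :
  is_kernel G N -> path (sole_out_neighbour G) x p ->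
  (x \in N) = (last x p \in N) (+) odd (size p).
Proof.
move=> kerN pth; apply: (path_alternating_parity (f := fun v => v \in N)).
by apply: sub_path pth => a b; apply: kernel_sole_out_neighbour kerN.
Qed.

Lemma mem_ear_arcs (x y : T) (p : seq T) (a : T * T) :
  (a \in ear_arcs (x, p, y)) = (a \in zip (x :: p) (rcons p y)).
Proof. by rewrite inE. Qed.

Section Ear.
Variables (E : rel T) (H : subdigraph T) (x0 x1 xr : T) (mid : seq T).
Hypotheses (subH : is_subdigraph E H) (earP : is_ear E H (x0, x1 :: mid, xr)).
Let G := add_ear H (x0, x1 :: mid, xr).

Lemma ear_belast_uniq : uniq (x0 :: x1 :: mid).
Proof.
have : uniq (rcons (x0 :: x1 :: mid) xr) by have [] := earP.
by rewrite rcons_uniq => /andP[].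
Qed.

Lemma add_ear_arc_from_base v y :
  v \in H.1 -> (v, y) \in G.2 -> (v, y) \in H.2 \/ (v = x0 /\ y = x1).
Proof.
move=> vH; rewrite inE => /orP[|]; first by left.
have [_ _ _ _ /allP midNH] := earP.
have uniq_belast := ear_belast_uniq.
rewrite mem_ear_arcs => vy_in; right.
have v_x0 : v = x0.
  move: (mem_zip_fst vy_in); rewrite inE => /orP[/eqP //| v_mid].
  by move: (midNH v v_mid); rewrite vH.
split=> //; apply: zip_uniq_fst uniq_belast vy_in _.
by rewrite v_x0 inE eqxx.
Qed.

Lemma ear_internal_path : path (sole_out_neighbour G) x1 (rcons mid xr).
Proof.
have [_ _ _ _ /allP midNH] := earP.
have uniq_belast := ear_belast_uniq.
have := path_mem_zip_belast x0 (x1 :: rcons mid xr).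
rewrite -rcons_cons belast_rcons => /andP[_].
apply: (sub_path_belast (P := mem (x1 :: mid))); last first.
  by rewrite belast_rcons; apply/allP.
move=> a b a_mid ab_in; apply/andP; split.
  apply/setUP; right; rewrite inE.
  have -> : ear_seq (x0, x1 :: mid, xr) = rcons (x0 :: x1 :: mid) xr by [].
  by rewrite mem_rcons; do 2!apply: mem_behead.
apply/forallP => c; apply/eqP; rewrite inE mem_ear_arcs.
have -> : ((a, c) \in H.2) = false.
  by apply/negP => /subH [_ aH _]; move: (midNH a a_mid); rewrite aH.
apply/idP/eqP => [ac_in | ->] /=; last exact: ab_in.
exact: zip_uniq_fst uniq_belast ac_in ab_in.
Qed.

Lemma ear_kernel_parity N :
  is_kernel G N -> (x1 \in N) = (xr \in N) (+) odd (size mid).+1.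
Proof.
move=> kerN; rewrite (kernel_parity_along kerN ear_internal_path).
by rewrite last_rcons size_rcons.
Qed.

Lemma add_ear_kernel_restrict N :
  is_kernel G N -> (x0 \in N) || (x1 \notin N) -> is_kernel H (N :&: H.1).
Proof.
move=> [_ indN absN] x0N_x1N; split; first exact: subsetIr.
  move=> x y /setIP[xN _] /setIP[yN _]; apply/negP => xy_arc.
  by move: (indN x y xN yN); rewrite inE xy_arc.
move=> v /setDP[vH]; rewrite inE vH andbT => vN.
have [|y yN /(add_ear_arc_from_base vH)[vy_arc | [v_x0 y_x1]]] := absN v.
- by rewrite !inE vN vH.
- by exists y; rewrite // inE yN; have [] := subH vy_arc.
- by move: x0N_x1N; rewrite -v_x0 -y_x1 (negPf vN) yN.
Qed.

End Ear.
End Kernels.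

Theorem mainTheorem6 (T : finType) (E : rel T) (k : nat)
    (Ds : nat -> subdigraph T) (Ps : nat -> T * seq T * T) (i : nat)
    (N : {set T}) :
  irreflexive E ->
  strong (whole_digraph E) -> nonseparable (whole_digraph E) ->
  ear_decomposition E k Ds Ps ->
  1 <= i <= k ->
  2 <= ear_len (Ps i.-1) ->
  is_kernel (Ds i) N ->
  let x0 := (Ps i.-1).1.1 in
  let xr := (Ps i.-1).2 in
  let l := ear_len (Ps i.-1) in
  [\/ x0 \in N /\ xr \in N,
      x0 \in N /\ xr \notin N,
      [/\ x0 \notin N, xr \in N & ~~ odd l]
    | [/\ x0 \notin N, xr \notin N & odd l]] ->
  has_kernel (Ds i.-1).
Proof.
move=> _ _ _ [_ DsP earsP _] /andP[i_gt0 i_le_k].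
case: i i_gt0 i_le_k => // j _ j_lt_k /=.
have [earP ->] := earsP j j_lt_k; have [subH _ _] := DsP j (ltnW j_lt_k).
case: (Ps j) earP => [[x0 [|x1 mid]] xr] // earP _ kerN /= N_ends.
exists (N :&: (Ds j).1); apply: (add_ear_kernel_restrict subH earP kerN).
rewrite (ear_kernel_parity subH earP kerN) /=; rewrite !negbK in N_ends.
case: N_ends => [[-> _] | [-> _] | [_ -> /negPf->] | [_ /negPf-> ->]];
  by rewrite ?orbT.
Qed.
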